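(* For all $\theta_1,\theta_2\in\mathbb{R}$, the mixed-power-affine bilinear form $g^{A,\theta_1,\theta_2}$ on $\mathrm{SPD}_n$ is symmetric and positive definite at every point, hence a Riemannian metric on $\mathrm{SPD}_n$; moreover $g^{A,\theta_1,\theta_2}=g^{A,\theta_2,\theta_1}$.
   Context: For $\theta\in\mathbb{R}$ define $\varphi_\theta:\mathrm{SPD}_n\to\mathrm{Sym}_n$ by $\varphi_\theta=\frac1\theta\mathrm{pow}_\theta$ if $\theta\neq0$ and $\varphi_0=\log$, where $\mathrm{pow}_\theta=\exp\circ(\theta\log)$ is the matrix power and $\log$ the symmetric matrix logarithm; $\partial_X\varphi_\theta(\Sigma)$ is the differential at $\Sigma$ applied to $X\in\mathrm{Sym}_n\cong T_\Sigma\mathrm{SPD}_n$. With $\theta=(\theta_1+\theta_2)/2$, the mixed-power-affine bilinear form is $g^{A,\theta_1,\theta_2}_\Sigma(X,Y)=\mathrm{tr}\big(\Sigma^{-\theta}\,\partial_X\varphi_{\theta_1}(\Sigma)\,\Sigma^{-\theta}\,\partial_Y\varphi_{\theta_2}(\Sigma)\big)$. *)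

(* classical reals. Matrices are represented as functions
   nat -> nat -> R; only indices < n are meaningful. *)
From Stdlib Require Import Reals Lra ClassicalEpsilon.
Open Scope R_scope.

Definition mat := nat -> nat -> R.

Fixpoint rsum (n : nat) (f : nat -> R) : R :=
  match n with O => 0 | S k => rsum k f + f k end.

Definition mmul (n : nat) (A B : mat) : mat :=
  fun i j => rsum n (fun k => A i k * B k j).

Definition mtr (n : nat) (A : mat) : R := rsum n (fun i => A i i).

Definition is_sym (n : nat) (A : mat) : Prop :=
  forall i j, (i < n)%nat -> (j < n)%nat -> A i j = A j i.

Definition is_spd (n : nat) (S : mat) : Prop :=
  is_sym n S /\
  forall x : nat -> R, (exists i, (i < n)%nat /\ x i <> 0) ->
    0 < rsum n (fun i => rsum n (fun j => x i * S i j * x j)).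

Definition is_orth (n : nat) (U : mat) : Prop :=
  forall i j, (i < n)%nat -> (j < n)%nat ->
    rsum n (fun k => U k i * U k j) = if Nat.eqb i j then 1 else 0.

(* Spectral functional calculus: for SPD S = U diag(lam) U^T,
   mfun f S = U diag(f lam) U^T (well defined independently of the
   chosen eigendecomposition; chosen by Hilbert's epsilon). *)
Definition mfun (n : nat) (f : R -> R) (S : mat) : mat :=
  epsilon (inhabits (fun _ _ => 0))
    (fun P : mat => exists (U : mat) (lam : nat -> R),
       is_orth n U /\ (forall k, (k < n)%nat -> 0 < lam k) /\
       (forall i j, (i < n)%nat -> (j < n)%nat ->
          S i j = rsum n (fun k => U i k * lam k * U j k)) /\
       (forall i j, (i < n)%nat -> (j < n)%nat ->
          P i j = rsum n (fun k => U i k * f (lam k) * U j k))).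

Definition powm (n : nat) (theta : R) (S : mat) : mat :=
  mfun n (fun l => exp (theta * ln l)) S.

Definition logm (n : nat) (S : mat) : mat := mfun n ln S.

Definition phi (n : nat) (theta : R) (S : mat) : mat :=
  if Req_dec_T theta 0 then logm n S
  else fun i j => / theta * powm n theta S i j.

Definition dphi (n : nat) (theta : R) (S X : mat) : mat :=
  epsilon (inhabits (fun _ _ => 0))
    (fun D : mat => forall i j, (i < n)%nat -> (j < n)%nat ->
       derivable_pt_lim (fun t => phi n theta (fun a b => S a b + t * X a b) i j)
         0 (D i j)).

Definition gMPA (n : nat) (theta1 theta2 : R) (S X Y : mat) : R :=
  let P := powm n (- ((theta1 + theta2) / 2)) S in
  mtr n (mmul n (mmul n (mmul n P (dphi n theta1 S X)) P) (dphi n theta2 S Y)).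

(** The Daleckii–Krein formula diagonalises everything in an eigenbasis of
    Σ = U diag(λ) Uᵀ: with Q = Uᵀ X U, one has Uᵀ ∂_X φ_θ(Σ) U = Q ∘ φ_θ^[1](λ),
    where φ_θ^[1](λ)_ab is the divided difference of the scalar φ_θ at λ_a, λ_b,
    and Σ^{-θ} = U diag(λ^{-θ}) Uᵀ.  Hence
      g(X, Y) = Σ_{a,b} λ_a^{-θ} λ_b^{-θ} φ_θ1^[1](λ_a,λ_b) φ_θ2^[1](λ_a,λ_b) Q^X_ab Q^Y_ab,
    which is visibly symmetric in (X, Y) and in (θ1, θ2), and positive definite
    because every divided difference of the increasing function φ_θ is positive
    (mean value theorem, φ_θ'(λ) = λ^{θ-1} > 0).

    The Daleckii–Krein formula is proved directly: writing
    Σ + hX = V diag(μ) Vᵀ and W = Uᵀ V, one has (μ_j - λ_k) W_kj = h (Uᵀ X V)_kj,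
    which rewrites the difference quotient of the spectral calculus as a sum
    weighted by differences of divided differences, small by their continuity.
    The spectral theorem is proved by Householder deflation from a real
    eigenvector, which exists since complex eigenvalues of a real symmetric
    matrix are real. *)

From Stdlib Require Import Reals Lra Lia ClassicalEpsilon FunctionalExtensionality.
From mathcomp Require all_boot all_algebra Rstruct complex spectral.
Open Scope R_scope.

Module ComplexEigen.
Import all_boot all_algebra Rstruct complex spectral.
Import GRing.Theory Num.Theory.

Lemma rsum_big (n : nat) (f : nat -> R) : rsum n f = (\sum_(i < n) f i)%R.
Proof.
elim: n => [|n IH] /=; first by rewrite big_ord0.
by rewrite big_ord_recr /= IH.
Qed.

Lemma Re_sum n (F : 'I_n -> R[i]) :
  complex.Re (\sum_(i < n) F i)%R = (\sum_(i < n) complex.Re (F i))%R.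
Proof.
elim: n F => [|n IH] F; first by rewrite !big_ord0.
by rewrite !big_ord_recr -IH; case: (\sum_(i < n) F _)%R; case: (F ord_max).
Qed.

Lemma Im_sum n (F : 'I_n -> R[i]) :
  complex.Im (\sum_(i < n) F i)%R = (\sum_(i < n) complex.Im (F i))%R.
Proof.
elim: n F => [|n IH] F; first by rewrite !big_ord0.
by rewrite !big_ord_recr -IH; case: (\sum_(i < n) F _)%R; case: (F ord_max).
Qed.

Lemma ReM (a b : R[i]) :
  complex.Re (a * b)%R = (complex.Re a * complex.Re b - complex.Im a * complex.Im b)%R.
Proof. by case: a => ? ?; case: b. Qed.

Lemma ImM (a b : R[i]) :
  complex.Im (a * b)%R = (complex.Im a * complex.Re b + complex.Re a * complex.Im b)%R.
Proof. by case: a => ? ?; case: b => ? ? /=; rewrite addrC. Qed.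

Lemma complex_left_eigenpair (n : nat) (A : nat -> nat -> R) : (0 < n)%coq_nat ->
  exists (al be : R) (x y : nat -> R),
    (exists i, (i < n)%coq_nat /\ (x i <> 0 \/ y i <> 0)) /\
    (forall j, (j < n)%coq_nat ->
       rsum n (fun i => x i * A i j) = Rminus (Rmult al (x j)) (Rmult be (y j)) /\
       rsum n (fun i => y i * A i j) = Rplus (Rmult be (x j)) (Rmult al (y j))).
Proof.
move=> /ltP n0; have [m Em] : exists m, n = m.+1 by case: n n0 => [//|m] _; exists m.
subst n; rename m into n.
pose Ac : 'M[R[i]]_n.+1 := (\matrix_(i, j) ((A i j)%:C)%C)%R.
have [a /eigenvalueP [v Hv vN0]] := eigenvalue_closed Ac n0.
pose x (i : nat) : R := complex.Re (v ord0 (inord i)).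
pose y (i : nat) : R := complex.Im (v ord0 (inord i)).
exists (complex.Re a), (complex.Im a), x, y; split.
  have [/existsP [i vi0]|/existsPn v0] := boolP [exists i, v ord0 i != 0%R].
    exists i; split; first exact/ltP/ltn_ord.
    rewrite /x /y inord_val; move: vi0; case: (v ord0 i) => re im /=.
    case: (Req_dec re 0) => [->|?]; last by left.
    case: (Req_dec im 0) => [->|?]; last by right.
    by rewrite eqxx.
  case/negP: vN0; apply/eqP/rowP => i; rewrite mxE.
  by move: (v0 i); rewrite negbK => /eqP.
move=> j /ltP jn.
have := congr1 (fun M : 'rV_n.+1 => M ord0 (Ordinal jn)) Hv.
rewrite /= !mxE => E.
have ER := congr1 (@complex.Re R) E; have EI := congr1 (@complex.Im R) E.
rewrite Re_sum in ER; rewrite Im_sum in EI.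
change (rsum n.+1 (fun i => x i * A i j) = (complex.Re a * x j - complex.Im a * y j)%R /\
        rsum n.+1 (fun i => y i * A i j) = (complex.Im a * x j + complex.Re a * y j)%R).
rewrite !rsum_big /x /y.
have -> : inord j = Ordinal jn :> 'I_n.+1 by apply/val_inj; rewrite /= inordK.
split.
  transitivity (complex.Re (a * v ord0 (Ordinal jn)))%R; last by rewrite ReM.
  rewrite -ER; apply: eq_bigr => i _; rewrite mxE inord_val.
  by case: (v ord0 i) => re im /=; rewrite mulr0 subr0.
transitivity (complex.Im (a * v ord0 (Ordinal jn)))%R; last by rewrite ImM.
rewrite -EI; apply: eq_bigr => i _; rewrite mxE inord_val.
by case: (v ord0 i) => re im /=; rewrite mulr0 add0r.
Qed.

Lemma orth_cols_rows (n : nat) (U : nat -> nat -> R) : is_orth n U ->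
  forall i j, (i < n)%coq_nat -> (j < n)%coq_nat ->
    rsum n (fun k => U i k * U j k) = if Nat.eqb i j then 1 else 0.
Proof.
move=> HU i j /ltP ilt /ltP jlt.
pose M : 'M[R]_n := (\matrix_(a, b) U a b)%R.
have delta_eq (a b : 'I_n) : (if Nat.eqb a b then 1 else 0) = ((a == b)%:R : R)%R.
  by case: (Nat.eqb_spec a b) => [/val_inj ->|ne]; rewrite ?eqxx //;
     case: eqP => // ab; case: ne; rewrite ab.
have MtM : (M^T *m M = 1%:M)%R.
  apply/matrixP => a b; rewrite !mxE -delta_eq.
  rewrite -(HU a b (elimT ltP (ltn_ord a)) (elimT ltP (ltn_ord b))) rsum_big.
  by apply: eq_bigr => k _; rewrite !mxE.
have := congr1 (fun N : 'M[R]_n => N (Ordinal ilt) (Ordinal jlt)) (mulmx1C MtM).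
rewrite /= !mxE rsum_big -(delta_eq (Ordinal ilt) (Ordinal jlt)) /= => <-.
by apply: eq_bigr => k _; rewrite !mxE.
Qed.

End ComplexEigen.

Lemma rsum_ext n f g : (forall i, (i < n)%nat -> f i = g i) -> rsum n f = rsum n g.
Proof.
  induction n; intros H; simpl; auto.
  rewrite IHn by (intros; apply H; lia). rewrite H by lia. reflexivity.
Qed.

Lemma rsum_0 n : rsum n (fun _ => 0) = 0.
Proof. induction n; simpl; [lra|rewrite IHn; lra]. Qed.

Lemma rsum_ext0 n f : (forall i, (i < n)%nat -> f i = 0) -> rsum n f = 0.
Proof. intros H. rewrite (rsum_ext n f (fun _ => 0)) by auto. apply rsum_0. Qed.

Lemma rsum_plus n f g : rsum n (fun i => f i + g i) = rsum n f + rsum n g.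
Proof. induction n; simpl; [lra|rewrite IHn; lra]. Qed.

Lemma rsum_minus n f g : rsum n (fun i => f i - g i) = rsum n f - rsum n g.
Proof. induction n; simpl; [lra|rewrite IHn; lra]. Qed.

Lemma rsum_scal_l n c f : rsum n (fun i => c * f i) = c * rsum n f.
Proof. induction n; simpl; [lra|rewrite IHn; lra]. Qed.

Lemma rsum_scal_r n c f : rsum n (fun i => f i * c) = rsum n f * c.
Proof. induction n; simpl; [lra|rewrite IHn; lra]. Qed.

Lemma rsum_swap n m f :
  rsum n (fun i => rsum m (fun j => f i j)) = rsum m (fun j => rsum n (fun i => f i j)).
Proof.
  induction n; simpl.
  - rewrite rsum_0; reflexivity.
  - rewrite IHn, <- rsum_plus. reflexivity.
Qed.

Lemma rsum_delta_r n f k : (k < n)%nat ->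
  rsum n (fun i => f i * (if Nat.eqb i k then 1 else 0)) = f k.
Proof.
  induction n; intros Hk; [lia|simpl].
  destruct (Nat.eq_dec k n) as [->|Hne].
  - rewrite rsum_ext0, Nat.eqb_refl; [ring|].
    intros i Hi. destruct (Nat.eqb_spec i n); [lia|ring].
  - rewrite IHn by lia. destruct (Nat.eqb_spec n k); [lia|ring].
Qed.

Lemma rsum_delta_l n f k : (k < n)%nat ->
  rsum n (fun i => (if Nat.eqb k i then 1 else 0) * f i) = f k.
Proof.
  intros Hk. rewrite <- (rsum_delta_r n f k Hk). apply rsum_ext; intros i _.
  rewrite Nat.eqb_sym. ring.
Qed.

Lemma rsum_le n f g : (forall i, (i < n)%nat -> f i <= g i) -> rsum n f <= rsum n g.
Proof.
  induction n; intros H; simpl; [lra|].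
  assert (rsum n f <= rsum n g) by (apply IHn; intros; apply H; lia).
  assert (f n <= g n) by (apply H; lia). lra.
Qed.

Lemma rsum_nonneg n f : (forall i, (i < n)%nat -> 0 <= f i) -> 0 <= rsum n f.
Proof. intros H. rewrite <- (rsum_0 n). apply rsum_le. auto. Qed.

Lemma rsum_ge_term n f k : (forall i, (i < n)%nat -> 0 <= f i) -> (k < n)%nat ->
  f k <= rsum n f.
Proof.
  induction n; intros H Hk; [lia|simpl].
  assert (0 <= rsum n f) by (apply rsum_nonneg; intros; apply H; lia).
  assert (0 <= f n) by (apply H; lia).
  destruct (Nat.eq_dec k n) as [->|Hne]; [lra|].
  assert (f k <= rsum n f) by (apply IHn; [intros; apply H|]; lia). lra.
Qed.

Lemma rsum_pos n f : (forall i, (i < n)%nat -> 0 <= f i) ->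
  (exists i, (i < n)%nat /\ 0 < f i) -> 0 < rsum n f.
Proof.
  intros H [i [Hi Hp]]. pose proof (rsum_ge_term n f i H Hi). lra.
Qed.

Lemma rsum_nonneg_eq0 n f : (forall i, (i < n)%nat -> 0 <= f i) -> rsum n f = 0 ->
  forall i, (i < n)%nat -> f i = 0.
Proof.
  intros H Hs i Hi. pose proof (rsum_ge_term n f i H Hi). pose proof (H i Hi). lra.
Qed.

Lemma rsum_sqr_pos n x : (exists i, (i < n)%nat /\ x i <> 0) ->
  0 < rsum n (fun i => x i * x i).
Proof.
  intros [i [Hi Hx]]. apply rsum_pos.
  - intros; apply Rle_0_sqr.
  - exists i; split; auto. apply Rsqr_pos_lt; auto.
Qed.

Lemma rsum_abs n f : Rabs (rsum n f) <= rsum n (fun i => Rabs (f i)).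
Proof.
  induction n; simpl.
  - rewrite Rabs_R0; lra.
  - eapply Rle_trans; [apply Rabs_triang|]. lra.
Qed.

Lemma rsum_const n c : rsum n (fun _ => c) = INR n * c.
Proof. induction n; simpl rsum; [simpl; ring|]. rewrite IHn, S_INR. ring. Qed.

Lemma rsum_abs_bound n f B : (forall i, (i < n)%nat -> Rabs (f i) <= B) ->
  Rabs (rsum n f) <= INR n * B.
Proof.
  intros H. eapply Rle_trans; [apply rsum_abs|]. rewrite <- rsum_const. apply rsum_le. auto.
Qed.

Lemma fin_pos_lower_bound n (l : nat -> R) : (forall k, (k < n)%nat -> 0 < l k) ->
  exists a, 0 < a /\ forall k, (k < n)%nat -> a <= l k.
Proof.
  induction n; intros H.
  - exists 1. split; [lra|intros; lia].
  - destruct IHn as [a [Ha Hk]]; [intros; apply H; lia|].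
    exists (Rmin a (l n)). split.
    + apply Rmin_pos; [auto | apply H; lia].
    + intros k Hk'. destruct (Nat.eq_dec k n) as [->|Hne]; [apply Rmin_r|].
      eapply Rle_trans; [apply Rmin_l|apply Hk; lia].
Qed.

Lemma fin_upper_bound n (l : nat -> R) : exists b, forall k, (k < n)%nat -> l k <= b.
Proof.
  induction n.
  - exists 0. intros; lia.
  - destruct IHn as [b Hk]. exists (Rmax b (l n)). intros k Hk'.
    destruct (Nat.eq_dec k n) as [->|Hne]; [apply Rmax_r|].
    eapply Rle_trans; [apply Hk; lia|apply Rmax_l].
Qed.

Lemma fin_common_delta n (P : nat -> R -> Prop) :
  (forall k d d', P k d -> 0 < d' -> d' <= d -> P k d') ->
  (forall k, (k < n)%nat -> exists d, 0 < d /\ P k d) ->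
  exists d, 0 < d /\ forall k, (k < n)%nat -> P k d.
Proof.
  intros Hmono. induction n; intros H.
  - exists 1. split; [lra|intros; lia].
  - destruct IHn as [d [Hd Hk]]; [intros; apply H; lia|].
    destruct (H n ltac:(lia)) as [d' [Hd' Hn]].
    exists (Rmin d d'). split; [apply Rmin_pos; auto|].
    intros k Hk'. destruct (Nat.eq_dec k n) as [->|Hne].
    + apply (Hmono n d'); auto. apply Rmin_pos; auto. apply Rmin_r.
    + apply (Hmono k d); auto. apply Hk; lia. apply Rmin_pos; auto. apply Rmin_l.
Qed.

Definition meq (n : nat) (A B : mat) : Prop :=
  forall i j, (i < n)%nat -> (j < n)%nat -> A i j = B i j.
Definition trm (A : mat) : mat := fun i j => A j i.
Definition idm : mat := fun i j => if Nat.eqb i j then 1 else 0.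
Definition diag (d : nat -> R) : mat := fun i j => if Nat.eqb i j then d i else 0.

Definition is_orth_rows (n : nat) (U : mat) : Prop :=
  forall i j, (i < n)%nat -> (j < n)%nat ->
    rsum n (fun k => U i k * U j k) = if Nat.eqb i j then 1 else 0.

Definition is_eigdec (n : nat) (S U : mat) (lam : nat -> R) : Prop :=
  forall i j, (i < n)%nat -> (j < n)%nat -> S i j = rsum n (fun k => U i k * lam k * U j k).

Lemma meq_refl n A : meq n A A.
Proof. intros i j _ _; auto. Qed.

Lemma meq_sym n A B : meq n A B -> meq n B A.
Proof. intros H i j Hi Hj; symmetry; auto. Qed.

Lemma meq_trans n A B C : meq n A B -> meq n B C -> meq n A C.
Proof. intros H1 H2 i j Hi Hj; rewrite H1, H2; auto. Qed.

Lemma idm_sym i j : idm i j = idm j i.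
Proof. unfold idm. rewrite Nat.eqb_sym. auto. Qed.

Lemma rsum_idm_l n f i : (i < n)%nat -> rsum n (fun k => idm i k * f k) = f i.
Proof. intros; unfold idm; apply rsum_delta_l; auto. Qed.

Lemma rsum_idm_r n f j : (j < n)%nat -> rsum n (fun k => f k * idm k j) = f j.
Proof. intros; unfold idm; apply rsum_delta_r; auto. Qed.

Lemma mmul_assoc n A B C : mmul n (mmul n A B) C = mmul n A (mmul n B C).
Proof.
  extensionality i. extensionality j. unfold mmul.
  transitivity (rsum n (fun k => rsum n (fun l => A i l * B l k * C k j))).
  - apply rsum_ext; intros k _. rewrite <- rsum_scal_r. reflexivity.
  - rewrite rsum_swap. apply rsum_ext; intros l _. rewrite <- rsum_scal_l.
    apply rsum_ext; intros k _. ring.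
Qed.

Lemma mmul_meq n A A' B B' : meq n A A' -> meq n B B' ->
  meq n (mmul n A B) (mmul n A' B').
Proof.
  intros HA HB i j Hi Hj. unfold mmul. apply rsum_ext; intros k Hk.
  rewrite HA, HB by auto. reflexivity.
Qed.

Lemma mmul_meq_l n A A' B : meq n A A' -> meq n (mmul n A B) (mmul n A' B).
Proof. intros H. apply mmul_meq; auto using meq_refl. Qed.

Lemma mmul_meq_r n A B B' : meq n B B' -> meq n (mmul n A B) (mmul n A B').
Proof. intros H. apply mmul_meq; auto using meq_refl. Qed.

Lemma mmul_idl n A : meq n (mmul n idm A) A.
Proof. intros i j Hi _. apply (rsum_idm_l n (fun k => A k j)). auto. Qed.

Lemma mmul_idr n A : meq n (mmul n A idm) A.
Proof. intros i j _ Hj. apply (rsum_idm_r n (fun k => A i k)). auto. Qed.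

Lemma mmul_diag_r n A d i j : (j < n)%nat -> mmul n A (diag d) i j = A i j * d j.
Proof.
  intros Hj. unfold mmul, diag.
  rewrite <- (rsum_delta_r n (fun k => A i k * d k) j Hj).
  apply rsum_ext; intros k _. destruct (Nat.eqb_spec k j); subst; ring.
Qed.

Lemma mmul_diag_l n A d i j : (i < n)%nat -> mmul n (diag d) A i j = d i * A i j.
Proof.
  intros Hi. unfold mmul, diag.
  rewrite <- (rsum_delta_l n (fun k => d k * A k j) i Hi).
  apply rsum_ext; intros k _. destruct (Nat.eqb_spec i k); subst; ring.
Qed.

Lemma trm_mmul n A B : trm (mmul n A B) = mmul n (trm B) (trm A).
Proof.
  extensionality i. extensionality j. unfold trm, mmul. apply rsum_ext; intros; ring.
Qed.

Lemma is_orthE n U : is_orth n U <-> meq n (mmul n (trm U) U) idm.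
Proof.
  unfold is_orth, meq, mmul, trm, idm. split; intros H i j Hi Hj; rewrite <- H; auto.
Qed.

Lemma is_orth_rowsE n U : is_orth_rows n U <-> meq n (mmul n U (trm U)) idm.
Proof.
  unfold is_orth_rows, meq, mmul, trm, idm. split; intros H i j Hi Hj; rewrite <- H; auto.
Qed.

Lemma orth_rows n U : is_orth n U -> is_orth_rows n U.
Proof. intros H i j Hi Hj. apply ComplexEigen.orth_cols_rows; auto. Qed.

Lemma conj_entry n U M p q :
  mmul n (mmul n U M) (trm U) p q = rsum n (fun i => rsum n (fun j => U p i * M i j * U q j)).
Proof.
  unfold mmul, trm. rewrite rsum_swap. apply rsum_ext; intros j _.
  rewrite <- rsum_scal_r. auto.
Qed.

Lemma is_eigdecE n S U lam :
  is_eigdec n S U lam <-> meq n S (mmul n (mmul n U (diag lam)) (trm U)).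
Proof.
  assert (E : forall i j, (j < n)%nat ->
    rsum n (fun k => U i k * lam k * U j k) = mmul n (mmul n U (diag lam)) (trm U) i j).
  { intros i j _. unfold mmul at 1. apply rsum_ext; intros k Hk.
    rewrite mmul_diag_r by auto. reflexivity. }
  unfold is_eigdec, meq. split; intros H i j Hi Hj; rewrite H, E; auto.
Qed.

Lemma conj_mmul n U A B : is_orth n U ->
  meq n (mmul n (mmul n (mmul n U A) (trm U)) (mmul n (mmul n U B) (trm U)))
        (mmul n (mmul n U (mmul n A B)) (trm U)).
Proof.
  intros HU. rewrite !mmul_assoc. apply mmul_meq_r, mmul_meq_r.
  rewrite <- mmul_assoc. eapply meq_trans; [apply mmul_meq_l, is_orthE; auto|].
  apply mmul_idl.
Qed.

Lemma mtr_meq n A B : meq n A B -> mtr n A = mtr n B.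
Proof. intros H. unfold mtr. apply rsum_ext; intros; auto. Qed.

Lemma mtr_mmulC n A B : mtr n (mmul n A B) = mtr n (mmul n B A).
Proof.
  unfold mtr, mmul. rewrite rsum_swap. apply rsum_ext; intros; apply rsum_ext; intros; ring.
Qed.

Lemma mtr_conj n U M : is_orth n U -> mtr n (mmul n (mmul n U M) (trm U)) = mtr n M.
Proof.
  intros HU. rewrite mtr_mmulC, <- mmul_assoc. apply mtr_meq.
  eapply meq_trans; [apply mmul_meq_l, is_orthE; auto|]. apply mmul_idl.
Qed.

Lemma is_sym_conj n H A : (forall i j, H i j = H j i) -> is_sym n A ->
  is_sym n (mmul n (mmul n H A) H).
Proof.
  intros Hs HA i j Hi Hj. unfold mmul.
  transitivity (rsum n (fun k => rsum n (fun l => H i l * A l k * H k j))).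
  { apply rsum_ext; intros; rewrite rsum_scal_r; auto. }
  transitivity (rsum n (fun k => rsum n (fun l => H j l * A l k * H k i))).
  2:{ apply rsum_ext; intros; rewrite rsum_scal_r; auto. }
  rewrite rsum_swap. apply rsum_ext; intros l Hl. apply rsum_ext; intros k Hk.
  rewrite (Hs i l), (Hs k j), (HA l k) by auto. ring.
Qed.

Lemma sym_bilin_swap n A x y : is_sym n A ->
  rsum n (fun j => rsum n (fun i => x i * A i j) * y j)
  = rsum n (fun j => rsum n (fun i => y i * A i j) * x j).
Proof.
  intros HA.
  transitivity (rsum n (fun j => rsum n (fun i => x i * A i j * y j))).
  { apply rsum_ext; intros; rewrite rsum_scal_r; auto. }
  rewrite rsum_swap. apply rsum_ext; intros i Hi. rewrite <- rsum_scal_r.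
  apply rsum_ext; intros j Hj. rewrite (HA i j) by auto. ring.
Qed.

Lemma sym_real_eigenvector n A : (0 < n)%nat -> is_sym n A ->
  exists al z, (exists i, (i < n)%nat /\ z i <> 0) /\
    forall j, (j < n)%nat -> rsum n (fun i => z i * A i j) = al * z j.
Proof.
  intros Hn HA.
  destruct (ComplexEigen.complex_left_eigenpair n A Hn) as (al & be & x & y & Hnz & Heq).
  set (sx := rsum n (fun j => x j * x j)). set (sy := rsum n (fun j => y j * y j)).
  set (sxy := rsum n (fun j => x j * y j)).
  (* Comparing x A y with y A x shows that the imaginary part [be] vanishes. *)
  assert (Hb : be * (sx + sy) = 0).
  { assert (E1 : rsum n (fun j => rsum n (fun i => x i * A i j) * y j) = al * sxy - be * sy).
    { unfold sxy, sy. rewrite <- !rsum_scal_l, <- rsum_minus. apply rsum_ext; intros j Hj.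
      destruct (Heq j Hj) as [-> _]. ring. }
    assert (E2 : rsum n (fun j => rsum n (fun i => y i * A i j) * x j) = be * sx + al * sxy).
    { unfold sxy, sx. rewrite <- !rsum_scal_l, <- rsum_plus. apply rsum_ext; intros j Hj.
      destruct (Heq j Hj) as [_ ->]. ring. }
    rewrite sym_bilin_swap, E2 in E1 by auto. lra. }
  assert (Hpos : 0 < sx + sy).
  { assert (0 <= sx) by (apply rsum_nonneg; intros; apply Rle_0_sqr).
    assert (0 <= sy) by (apply rsum_nonneg; intros; apply Rle_0_sqr).
    destruct Hnz as [i [Hi [Hxi|Hyi]]].
    - assert (0 < sx) by (apply rsum_sqr_pos; eauto). lra.
    - assert (0 < sy) by (apply rsum_sqr_pos; eauto). lra. }
  assert (be = 0) as -> by (apply Rmult_integral in Hb; destruct Hb; [auto|lra]).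
  destruct (classic (exists i, (i < n)%nat /\ x i <> 0)) as [Hx|Hx].
  - exists al, x. split; auto. intros j Hj. destruct (Heq j Hj) as [-> _]. ring.
  - exists al, y. split.
    + destruct Hnz as [i [Hi [H|H]]]; [exfalso; apply Hx; eauto|eauto].
    + intros j Hj. destruct (Heq j Hj) as [_ ->].
      assert (x j = 0) as -> by (apply NNPP; intros C; apply Hx; eauto). ring.
Qed.

Lemma sym_unit_eigenvector n A : (0 < n)%nat -> is_sym n A ->
  exists al z, rsum n (fun i => z i * z i) = 1 /\
    forall i, (i < n)%nat -> rsum n (fun j => A i j * z j) = al * z i.
Proof.
  intros Hn HA.
  destruct (sym_real_eigenvector n A Hn HA) as [al [z [Hnz Hz]]].
  set (s := rsum n (fun i => z i * z i)).
  assert (Hs : 0 < s) by (apply rsum_sqr_pos; auto).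
  assert (Hr : sqrt s <> 0) by (apply Rgt_not_eq, sqrt_lt_R0; auto).
  exists al, (fun i => z i / sqrt s). split.
  - transitivity (s * / (sqrt s * sqrt s)).
    + unfold s. rewrite <- rsum_scal_r. apply rsum_ext; intros. field. auto.
    + rewrite sqrt_sqrt by lra. field. lra.
  - intros i Hi.
    transitivity (rsum n (fun j => z j * A j i) / sqrt s).
    + unfold Rdiv. rewrite <- rsum_scal_r. apply rsum_ext; intros j Hj.
      rewrite (HA i j) by auto. ring.
    + rewrite Hz by auto. field. auto.
Qed.

Definition reflect_dir (m : nat) (w : nat -> R) (i : nat) : R := w i - idm i m.

(* The Householder reflection exchanging the unit vector [w] with [e_m]. *)
Definition householder (m : nat) (w : nat -> R) : mat := fun i j =>
  if Req_dec_T (w m) 1 then idm i j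
  else idm i j - reflect_dir m w i * reflect_dir m w j / (1 - w m).

Lemma householder_sym m w i j : householder m w i j = householder m w j i.
Proof.
  unfold householder. rewrite idm_sym. destruct Req_dec_T; [auto|].
  unfold Rdiv. ring.
Qed.

Lemma reflect_dir_norm2 m w :
  rsum (S m) (fun k => reflect_dir m w k * reflect_dir m w k) =
  rsum (S m) (fun k => w k * w k) - 2 * w m + 1.
Proof.
  unfold reflect_dir.
  transitivity (rsum (S m) (fun k => w k * w k) - 2 * rsum (S m) (fun k => w k * idm k m)
                + rsum (S m) (fun k => 1 * idm k m)).
  - rewrite <- rsum_scal_l, <- rsum_minus, <- rsum_plus. apply rsum_ext; intros k _.
    unfold idm. destruct (Nat.eqb k m); ring.
  - unfold idm. rewrite (rsum_delta_r (S m) w m), (rsum_delta_r (S m) (fun _ => 1) m) by lia.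
    ring.
Qed.

Lemma householder_col m w : rsum (S m) (fun i => w i * w i) = 1 ->
  forall i, (i < S m)%nat -> householder m w i m = w i.
Proof.
  intros Hw i Hi. unfold householder, reflect_dir.
  assert (Hmm : idm m m = 1) by (unfold idm; rewrite Nat.eqb_refl; auto).
  destruct Req_dec_T as [E|E].
  - simpl in Hw. rewrite E, Rmult_1_l in Hw.
    destruct (Nat.eq_dec i m) as [->|Hne]; [rewrite Hmm, E; auto|].
    pose proof (rsum_nonneg_eq0 m (fun k => w k * w k) (fun k _ => Rle_0_sqr (w k)) ltac:(lra) i ltac:(lia)) as Hz.
    unfold idm. destruct (Nat.eqb_spec i m); [lia|].
    apply Rmult_integral in Hz. destruct Hz; auto.
  - rewrite Hmm. field. lra.
Qed.

Lemma householder_invol m w : rsum (S m) (fun i => w i * w i) = 1 ->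
  meq (S m) (mmul (S m) (householder m w) (householder m w)) idm.
Proof.
  intros Hw i j Hi Hj. unfold householder. destruct Req_dec_T as [E|E].
  - apply mmul_idl; auto.
  - set (d := reflect_dir m w). set (c := 1 - w m). unfold mmul.
    transitivity (rsum (S m) (fun k => idm i k * idm k j)
       - d i / c * rsum (S m) (fun k => d k * idm k j)
       - d j / c * rsum (S m) (fun k => idm i k * d k)
       + d i * d j / (c * c) * rsum (S m) (fun k => d k * d k)).
    + rewrite <- !rsum_scal_l, <- rsum_minus, <- rsum_minus, <- rsum_plus.
      apply rsum_ext; intros k _. field. unfold c; lra.
    + unfold d. rewrite reflect_dir_norm2, Hw.
      rewrite (rsum_idm_l (S m) (fun k => idm k j) i) by auto.
      rewrite (rsum_idm_r (S m) (reflect_dir m w) j) by auto.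
      rewrite (rsum_idm_l (S m) (reflect_dir m w) i) by auto.
      unfold c. field. lra.
Qed.

Definition mx_ext1 (m : nat) (V : mat) : mat := fun i j =>
  if Nat.ltb i m then (if Nat.ltb j m then V i j else 0) else idm i j.
Definition vec_ext1 (m : nat) (mu : nat -> R) (al : R) : nat -> R := fun k =>
  if Nat.ltb k m then mu k else al.

Lemma mx_ext1_orth m V : is_orth m V -> is_orth (S m) (mx_ext1 m V).
Proof.
  intros HV i j Hi Hj. simpl rsum.
  unfold mx_ext1 at 3 4. rewrite Nat.ltb_irrefl.
  rewrite (rsum_ext m _ (fun k => (if Nat.ltb i m then V k i else 0) *
                                  (if Nat.ltb j m then V k j else 0))).
  2:{ intros k Hk. unfold mx_ext1. apply Nat.ltb_lt in Hk. rewrite Hk. auto. }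
  unfold idm.
  destruct (Nat.ltb_spec i m); destruct (Nat.ltb_spec j m).
  - rewrite HV by auto. destruct (Nat.eqb_spec m i); [lia|]. ring.
  - assert (j = m) as -> by lia.
    rewrite rsum_ext0 by (intros; ring). rewrite Nat.eqb_refl.
    destruct (Nat.eqb_spec m i); [lia|]. destruct (Nat.eqb_spec i m); [lia|]. ring.
  - assert (i = m) as -> by lia.
    rewrite rsum_ext0 by (intros; ring). rewrite Nat.eqb_refl.
    destruct (Nat.eqb_spec m j); [lia|]. ring.
  - assert (i = m) as -> by lia. assert (j = m) as -> by lia.
    rewrite rsum_ext0 by (intros; ring). rewrite Nat.eqb_refl. ring.
Qed.

Lemma mx_ext1_eigdec m A V mu al : is_eigdec m A V mu ->
  (forall i, (i < S m)%nat -> A i m = al * idm i m) ->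
  (forall j, (j < S m)%nat -> A m j = al * idm m j) ->
  is_eigdec (S m) A (mx_ext1 m V) (vec_ext1 m mu al).
Proof.
  intros HV Hc Hr i j Hi Hj. simpl rsum.
  unfold mx_ext1 at 3 4, vec_ext1 at 2. rewrite Nat.ltb_irrefl.
  rewrite (rsum_ext m _ (fun k => (if Nat.ltb i m then V i k else 0) * mu k *
                                  (if Nat.ltb j m then V j k else 0))).
  2:{ intros k Hk. unfold mx_ext1, vec_ext1. assert (Hk' := Hk). apply Nat.ltb_lt in Hk'.
      rewrite Hk'.
      destruct (Nat.ltb_spec i m); destruct (Nat.ltb_spec j m); unfold idm;
      repeat match goal with |- context [Nat.eqb ?a ?b] => destruct (Nat.eqb_spec a b) end;
      try lia; ring. }
  unfold idm.
  destruct (Nat.ltb_spec i m); destruct (Nat.ltb_spec j m).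
  - rewrite HV by auto. destruct (Nat.eqb_spec i m); [lia|]. ring.
  - assert (j = m) as -> by lia. rewrite Hc by auto. unfold idm.
    rewrite rsum_ext0 by (intros; ring).
    destruct (Nat.eqb_spec i m); [lia|]. ring.
  - assert (i = m) as -> by lia. rewrite Hr by auto. unfold idm.
    rewrite rsum_ext0 by (intros; ring).
    rewrite Nat.eqb_refl. destruct (Nat.eqb_spec m j); [lia|]. ring.
  - assert (i = m) as -> by lia. assert (j = m) as -> by lia. rewrite Hc by auto. unfold idm.
    rewrite rsum_ext0 by (intros; ring). rewrite Nat.eqb_refl. ring.
Qed.

(* Conjugating by the Householder reflection H sending an eigenvector to e_m
   puts A in block form diag(A', al); recurse on A'. *)
Theorem spectral_decomposition n A : is_sym n A ->
  exists V mu, is_orth n V /\ is_eigdec n A V mu.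
Proof.
  revert A. induction n as [|m IH]; intros A HA.
  { exists (fun _ _ => 0), (fun _ => 0). split; intros i j Hi; lia. }
  destruct (sym_unit_eigenvector (S m) A) as [al [w [Hw Hev]]]; [lia|auto|].
  set (H := householder m w).
  assert (Hsym : forall i j, H i j = H j i) by (intros; apply householder_sym).
  assert (Hinv : meq (S m) (mmul (S m) H H) idm) by (apply householder_invol; auto).
  assert (Hcol : forall i, (i < S m)%nat -> H i m = w i) by (apply householder_col; auto).
  assert (HtH : trm H = H) by (extensionality i; extensionality j; apply Hsym).
  set (A' := mmul (S m) (mmul (S m) H A) H).
  assert (HA' : is_sym (S m) A') by (apply is_sym_conj; auto).
  assert (HA'col : forall i, (i < S m)%nat -> A' i m = al * idm i m).
  { intros i Hi. unfold A'. rewrite mmul_assoc. unfold mmul at 1.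
    transitivity (rsum (S m) (fun l => H i l * (al * H l m))).
    - apply rsum_ext; intros l Hl. f_equal. unfold mmul.
      rewrite Hcol, <- Hev by lia. apply rsum_ext; intros k Hk. rewrite Hcol; auto.
    - rewrite <- (Hinv i m) by lia. unfold mmul.
      rewrite <- rsum_scal_l. apply rsum_ext; intros; ring. }
  assert (HA'row : forall j, (j < S m)%nat -> A' m j = al * idm m j).
  { intros j Hj. rewrite HA', HA'col, idm_sym by lia. auto. }
  destruct (IH A') as [V [mu [HVo HVd]]].
  { intros i j Hi Hj. apply HA'; lia. }
  set (B := mx_ext1 m V).
  assert (HBo : is_orth (S m) B) by (apply mx_ext1_orth; auto).
  assert (HBd : is_eigdec (S m) A' B (vec_ext1 m mu al)) by (apply mx_ext1_eigdec; auto).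
  exists (mmul (S m) H B), (vec_ext1 m mu al). split.
  - apply is_orthE. rewrite trm_mmul, HtH, !mmul_assoc, <- (mmul_assoc _ H H B).
    eapply meq_trans; [apply mmul_meq_r, mmul_meq_l, Hinv|].
    eapply meq_trans; [apply mmul_meq_r, mmul_idl|]. apply is_orthE; auto.
  - apply is_eigdecE. rewrite trm_mmul, HtH.
    set (D := diag (vec_ext1 m mu al)).
    assert (HAA' : meq (S m) A (mmul (S m) (mmul (S m) H A') H)).
    { replace (mmul (S m) (mmul (S m) H A') H)
        with (mmul (S m) (mmul (S m) (mmul (S m) H H) A) (mmul (S m) H H))
        by (unfold A'; rewrite !mmul_assoc; reflexivity).
      apply meq_sym. eapply meq_trans; [apply mmul_meq; [apply mmul_meq_l|]; apply Hinv|].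
      eapply meq_trans; [apply mmul_idr|apply mmul_idl]. }
    eapply meq_trans; [apply HAA'|].
    replace (mmul (S m) (mmul (S m) (mmul (S m) H B) D) (mmul (S m) (trm B) H))
      with (mmul (S m) (mmul (S m) H (mmul (S m) (mmul (S m) B D) (trm B))) H)
      by (rewrite !mmul_assoc; reflexivity).
    apply mmul_meq_l, mmul_meq_r, is_eigdecE; auto.
Qed.

Lemma eigdec_mul_col n B U lam : is_orth n U -> is_eigdec n B U lam ->
  forall i k, (i < n)%nat -> (k < n)%nat ->
  rsum n (fun j => B i j * U j k) = lam k * U i k.
Proof.
  intros HU HB i k Hi Hk.
  transitivity (rsum n (fun l => U i l * lam l * rsum n (fun j => U j l * U j k))).
  - transitivity (rsum n (fun j => rsum n (fun l => U i l * lam l * U j l * U j k))).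
    + apply rsum_ext; intros j Hj. rewrite HB by auto. rewrite <- rsum_scal_r. auto.
    + rewrite rsum_swap. apply rsum_ext; intros l Hl. rewrite <- rsum_scal_l.
      apply rsum_ext; intros; ring.
  - rewrite (rsum_ext n _ (fun l => U i l * lam l * (if Nat.eqb l k then 1 else 0))).
    + rewrite (rsum_delta_r n (fun l => U i l * lam l) k Hk). ring.
    + intros l Hl. rewrite HU by auto. auto.
Qed.

Lemma eigval_quad n B V mu j : is_orth n V -> is_eigdec n B V mu -> (j < n)%nat ->
  mu j = rsum n (fun a => rsum n (fun b => V a j * B a b * V b j)).
Proof.
  intros HV Hd Hj.
  transitivity (rsum n (fun a => V a j * (mu j * V a j))).
  - rewrite (rsum_ext n _ (fun a => mu j * (V a j * V a j))) by (intros; ring).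
    rewrite rsum_scal_l, (HV j j Hj Hj), Nat.eqb_refl. ring.
  - apply rsum_ext; intros a Ha. rewrite <- (eigdec_mul_col n B V mu HV Hd a j Ha Hj).
    rewrite <- rsum_scal_l. apply rsum_ext; intros; ring.
Qed.

Definition gram (n : nat) (U V : mat) (k j : nat) : R := rsum n (fun e => U e k * V e j).
Definition qform (n : nat) (U M V : mat) (k j : nat) : R :=
  rsum n (fun a => rsum n (fun b => U a k * M a b * V b j)).

Lemma qform_eig_r n U B V mu : is_orth n V -> is_eigdec n B V mu ->
  forall k j, (j < n)%nat -> qform n U B V k j = mu j * gram n U V k j.
Proof.
  intros HV HB k j Hj. unfold qform, gram. rewrite <- rsum_scal_l.
  apply rsum_ext; intros a Ha.
  transitivity (U a k * rsum n (fun b => B a b * V b j)).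
  - rewrite <- rsum_scal_l. apply rsum_ext; intros; ring.
  - rewrite (eigdec_mul_col n B V mu) by auto. ring.
Qed.

Lemma qform_eig_l n U B V lam : is_sym n B -> is_orth n U -> is_eigdec n B U lam ->
  forall k j, (k < n)%nat -> qform n U B V k j = lam k * gram n U V k j.
Proof.
  intros HBs HU HB k j Hk. unfold qform, gram. rewrite rsum_swap, <- rsum_scal_l.
  apply rsum_ext; intros b Hb.
  transitivity (rsum n (fun a => B b a * U a k) * V b j).
  - rewrite <- rsum_scal_r. apply rsum_ext; intros a Ha. rewrite (HBs b a) by auto. ring.
  - rewrite (eigdec_mul_col n B U lam) by auto. ring.
Qed.

Lemma qform_add_scal n U V B X t k j :
  qform n U (fun a b => B a b + t * X a b) V k j = qform n U B V k j + t * qform n U X V k j.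
Proof.
  unfold qform. rewrite <- rsum_scal_l, <- rsum_plus. apply rsum_ext; intros a _.
  rewrite <- rsum_scal_l, <- rsum_plus. apply rsum_ext; intros; ring.
Qed.

Lemma qform_sym n U X i j : is_sym n X -> qform n U X U i j = qform n U X U j i.
Proof.
  intros HX. unfold qform. rewrite rsum_swap. apply rsum_ext; intros a Ha.
  apply rsum_ext; intros b Hb. rewrite (HX b a) by auto. ring.
Qed.

Lemma rsum_gram_l n U V p j : is_orth_rows n U -> (p < n)%nat ->
  rsum n (fun i => U p i * gram n U V i j) = V p j.
Proof.
  intros HU Hp. unfold gram.
  transitivity (rsum n (fun e => rsum n (fun i => U p i * U e i) * V e j)).
  - transitivity (rsum n (fun i => rsum n (fun e => U p i * U e i * V e j))).
    + apply rsum_ext; intros i _. rewrite <- (rsum_scal_l n (U p i)).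
      apply rsum_ext; intros; ring.
    + rewrite rsum_swap. apply rsum_ext; intros e _. rewrite rsum_scal_r; auto.
  - transitivity (rsum n (fun e => (if Nat.eqb p e then 1 else 0) * V e j)).
    + apply rsum_ext; intros e He. rewrite HU by auto. auto.
    + apply (rsum_delta_l n (fun e => V e j)); auto.
Qed.

Lemma rsum_gram_r n U V q i : is_orth_rows n V -> (q < n)%nat ->
  rsum n (fun j => gram n U V i j * V q j) = U q i.
Proof.
  intros HV Hq. unfold gram.
  transitivity (rsum n (fun e => U e i * rsum n (fun j => V e j * V q j))).
  - transitivity (rsum n (fun j => rsum n (fun e => U e i * V e j * V q j))).
    + apply rsum_ext; intros j _. rewrite <- (rsum_scal_r n (V q j)).
      apply rsum_ext; intros; ring.
    + rewrite rsum_swap. apply rsum_ext; intros e _. rewrite <- (rsum_scal_l n (U e i)).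
      apply rsum_ext; intros; ring.
  - transitivity (rsum n (fun e => U e i * (if Nat.eqb e q then 1 else 0))).
    + apply rsum_ext; intros e He. rewrite HV by auto. auto.
    + apply (rsum_delta_r n (fun e => U e i)); auto.
Qed.

Lemma spectral_diff_gram n U V g h p q : is_orth_rows n U -> is_orth_rows n V ->
  (p < n)%nat -> (q < n)%nat ->
  rsum n (fun i => rsum n (fun j => U p i * gram n U V i j * (g j - h i) * V q j))
  = rsum n (fun j => V p j * g j * V q j) - rsum n (fun i => U p i * h i * U q i).
Proof.
  intros HU HV Hp Hq.
  transitivity (rsum n (fun i => rsum n (fun j => U p i * gram n U V i j * g j * V q j))
              - rsum n (fun i => U p i * h i * rsum n (fun j => gram n U V i j * V q j))).
  - rewrite <- rsum_minus. apply rsum_ext; intros i _.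
    rewrite <- rsum_scal_l, <- rsum_minus. apply rsum_ext; intros; ring.
  - f_equal.
    + rewrite rsum_swap. apply rsum_ext; intros j _.
      rewrite <- (rsum_gram_l n U V p j) by auto. rewrite <- !rsum_scal_r.
      apply rsum_ext; intros; ring.
    + apply rsum_ext; intros i _. rewrite rsum_gram_r by auto. auto.
Qed.

Lemma gram_perturb n A X U lam V mu t : is_sym n A -> is_orth n U -> is_eigdec n A U lam ->
  is_orth n V -> is_eigdec n (fun a b => A a b + t * X a b) V mu ->
  forall k j, (k < n)%nat -> (j < n)%nat ->
  (mu j - lam k) * gram n U V k j = t * qform n U X V k j.
Proof.
  intros HA HU HdU HV HdV k j Hk Hj.
  pose proof (qform_eig_r n U _ V mu HV HdV k j Hj) as E.
  rewrite qform_add_scal, (qform_eig_l n U A V lam HA HU HdU k j Hk) in E. lra.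
Qed.

Lemma mfun_eigdec n f B V mu : is_sym n B -> is_orth n V -> is_eigdec n B V mu ->
  (forall k, (k < n)%nat -> 0 < mu k) ->
  forall p q, (p < n)%nat -> (q < n)%nat ->
  mfun n f B p q = rsum n (fun j => V p j * f (mu j) * V q j).
Proof.
  intros HS HV HdV Hmu p q Hp Hq. unfold mfun.
  match goal with |- epsilon ?i ?P p q = _ =>
    destruct (epsilon_spec i P) as [U [lam [HU [Hl [HdU HP]]]]] end.
  { exists (fun i j => rsum n (fun k => V i k * f (mu k) * V j k)), V, mu.
    repeat split; auto. }
  rewrite HP by auto.
  assert (E := spectral_diff_gram n U V (fun j => f (mu j)) (fun i => f (lam i)) p q
                 (orth_rows n U HU) (orth_rows n V HV) Hp Hq).
  rewrite rsum_ext0 in E; [lra|].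
  intros i Hi. apply rsum_ext0; intros j Hj.
  pose proof (gram_perturb n B (fun _ _ => 0) U lam V mu 0 HS HU HdU HV) as Hg.
  assert (Hmj : (mu j - lam i) * gram n U V i j = 0).
  { rewrite Hg; auto; [ring|]. intros a b Ha Hb. rewrite HdV by auto. ring. }
  destruct (Req_dec (gram n U V i j) 0) as [->|Z]; [ring|].
  assert (mu j = lam i) as -> by (apply Rmult_integral in Hmj; destruct Hmj; [lra|contradiction]).
  ring.
Qed.

Section DividedDifference.

Variables f f' : R -> R.

Definition divdiff (x y : R) : R :=
  if Req_dec_T x y then f' x else (f x - f y) / (x - y).

Lemma divdiff_mul x y : divdiff x y * (x - y) = f x - f y.
Proof.
  unfold divdiff. destruct Req_dec_T as [E|E].
  - subst. ring.
  - field. lra.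
Qed.

Lemma divdiff_sym x y : divdiff x y = divdiff y x.
Proof.
  unfold divdiff. destruct (Req_dec_T x y) as [E|E]; destruct (Req_dec_T y x) as [E'|E'].
  - subst; auto.
  - subst; exfalso; auto.
  - subst; exfalso; auto.
  - field. lra.
Qed.

Hypothesis f_deriv : forall x, 0 < x -> derivable_pt_lim f x (f' x).

Lemma divdiff_mvt x y : 0 < x -> 0 < y ->
  exists c, Rmin x y <= c <= Rmax x y /\ divdiff x y = f' c.
Proof.
  intros Hx Hy. unfold divdiff, Rmin, Rmax. destruct Req_dec_T as [E|E].
  - exists x. subst. split; auto. destruct Rle_dec; lra.
  - destruct (Rlt_le_dec x y) as [Hl|Hl].
    + destruct (MVT_cor2 f f' x y Hl) as [c [Hc1 Hc2]].
      { intros c Hc. apply f_deriv. lra. }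
      exists c. split; [destruct Rle_dec; lra|].
      replace (f x - f y) with (-(f y - f x)) by ring.
      rewrite Hc1. field. lra.
    + destruct (MVT_cor2 f f' y x ltac:(lra)) as [c [Hc1 Hc2]].
      { intros c Hc. apply f_deriv. lra. }
      exists c. split; [destruct Rle_dec; lra|].
      rewrite Hc1. field. lra.
Qed.

Lemma divdiff_bound a b : 0 < a ->
  (exists M, forall x, a <= x <= b -> Rabs (f' x) <= M) ->
  exists M, 0 <= M /\ forall x y, a <= x <= b -> a <= y <= b -> Rabs (divdiff x y) <= M.
Proof.
  intros Ha [M HM]. exists (Rabs M). split; [apply Rabs_pos|].
  intros x y Hx Hy. destruct (divdiff_mvt x y) as [c [Hc ->]]; try lra.
  eapply Rle_trans; [apply HM|apply Rle_abs].
  unfold Rmin, Rmax in Hc; destruct Rle_dec; lra.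
Qed.

Lemma divdiff_continuous_r x y0 : 0 < x -> 0 < y0 -> forall eps, 0 < eps ->
  exists del, 0 < del /\ forall y, 0 < y -> Rabs (y - y0) < del ->
    Rabs (divdiff x y - divdiff x y0) < eps.
Proof.
  intros Hx Hy0 eps He.
  destruct (Req_dec x y0) as [<-|E].
  - destruct (f_deriv x Hx eps He) as [del Hdel].
    exists del. split; [apply cond_pos|]. intros y Hy Hyd.
    destruct (Req_dec y x) as [->|E'].
    + rewrite Rminus_diag, Rabs_R0. auto.
    + specialize (Hdel (y - x) ltac:(lra) Hyd).
      replace (x + (y - x)) with y in Hdel by ring.
      rewrite (divdiff_sym x y). unfold divdiff.
      destruct Req_dec_T as [E2|E2]; [lra|]. destruct Req_dec_T as [_|E3]; [|lra]. auto.
  - assert (Hc : continuity_pt f y0).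
    { apply derivable_continuous_pt; exists (f' y0); apply f_deriv; auto. }
    assert (Hg : continuity_pt (fun y => (f x - f y) / (x - y)) y0).
    { apply continuity_pt_div.
      - apply continuity_pt_minus; [apply continuity_pt_const; intros ? ?; auto|auto].
      - apply continuity_pt_minus;
          [apply continuity_pt_const; intros ? ?; auto|apply derivable_continuous_pt, derivable_pt_id].
      - lra. }
    destruct (Hg eps He) as [alp [Halp Hd]].
    exists (Rmin alp (Rabs (x - y0))). split.
    { apply Rmin_pos; auto. apply Rabs_pos_lt. lra. }
    intros y Hy Hyd.
    assert (Hyx : y <> x).
    { intros ->. pose proof (Rmin_r alp (Rabs (x - y0))). lra. }
    unfold divdiff. destruct Req_dec_T; [lra|]. destruct Req_dec_T; [lra|].
    destruct (Req_dec y y0) as [->|Hne].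
    { rewrite Rminus_diag, Rabs_R0. auto. }
    apply (Hd y). split.
    + unfold D_x, no_cond. split; auto.
    + simpl. unfold R_dist. pose proof (Rmin_l alp (Rabs (x - y0))). lra.
Qed.

End DividedDifference.

Lemma Rabs_le_1_of_sqr x : x * x <= 1 -> Rabs x <= 1.
Proof.
  intros H. rewrite <- (Rabs_pos_eq 1) by lra. apply Rsqr_le_abs_0. unfold Rsqr. lra.
Qed.

Lemma orth_entry_bound n U a k : is_orth n U -> (a < n)%nat -> (k < n)%nat ->
  Rabs (U a k) <= 1.
Proof.
  intros HU Ha Hk. apply Rabs_le_1_of_sqr.
  pose proof (HU k k Hk Hk) as E. rewrite Nat.eqb_refl in E. rewrite <- E.
  apply (rsum_ge_term n (fun e => U e k * U e k)); auto. intros; apply Rle_0_sqr.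
Qed.

Lemma gram_bound n U V k j : is_orth n U -> is_orth n V -> (k < n)%nat -> (j < n)%nat ->
  Rabs (gram n U V k j) <= 1.
Proof.
  intros HU HV Hk Hj. unfold gram. eapply Rle_trans; [apply rsum_abs|].
  pose proof (HU k k Hk Hk) as E1. pose proof (HV j j Hj Hj) as E2.
  rewrite Nat.eqb_refl in E1, E2.
  apply Rle_trans with (rsum n (fun e => (U e k * U e k + V e j * V e j) / 2)).
  - apply rsum_le; intros e _. rewrite Rabs_mult.
    pose proof (Rle_0_sqr (Rabs (U e k) - Rabs (V e j))). unfold Rsqr in *.
    rewrite <- (Rabs_pos_eq (U e k * U e k)), <- (Rabs_pos_eq (V e j * V e j))
      by apply Rle_0_sqr.
    rewrite !Rabs_mult. nra.
  - unfold Rdiv. rewrite rsum_scal_r, rsum_plus, E1, E2. lra.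
Qed.

Lemma orth_coords_norm2 n U v : is_orth n U ->
  rsum n (fun k => rsum n (fun a => v a * U a k) * rsum n (fun a => v a * U a k))
  = rsum n (fun a => v a * v a).
Proof.
  intros HU.
  transitivity (rsum n (fun a => rsum n (fun b => v a * v b * rsum n (fun k => U a k * U b k)))).
  - transitivity (rsum n (fun k => rsum n (fun a => rsum n (fun b => v a * U a k * (v b * U b k))))).
    + apply rsum_ext; intros k _. rewrite <- rsum_scal_r. apply rsum_ext; intros a _.
      rewrite <- rsum_scal_l. auto.
    + rewrite rsum_swap. apply rsum_ext; intros a _. rewrite rsum_swap.
      apply rsum_ext; intros b _. rewrite <- rsum_scal_l. apply rsum_ext; intros; ring.
  - apply rsum_ext; intros a Ha.
    rewrite (rsum_ext n _ (fun b => v a * v b * (if Nat.eqb b a then 1 else 0))).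
    + apply (rsum_delta_r n (fun b => v a * v b) a Ha).
    + intros b Hb. rewrite (orth_rows n U HU a b Ha Hb), Nat.eqb_sym. auto.
Qed.

Lemma rayleigh_range n A U lam lo hi v : is_orth n U -> is_eigdec n A U lam ->
  (forall k, (k < n)%nat -> lo <= lam k <= hi) -> rsum n (fun a => v a * v a) = 1 ->
  lo <= rsum n (fun a => rsum n (fun b => v a * A a b * v b)) <= hi.
Proof.
  intros HU Hd Hl Hv.
  set (c := fun k => rsum n (fun a => v a * U a k)).
  assert (Ec : rsum n (fun k => c k * c k) = 1) by (rewrite <- Hv; apply orth_coords_norm2; auto).
  assert (Eq : rsum n (fun a => rsum n (fun b => v a * A a b * v b))
               = rsum n (fun k => lam k * (c k * c k))).
  { transitivity (rsum n (fun a => rsum n (fun b =>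
                    rsum n (fun k => v a * U a k * lam k * U b k * v b)))).
    - apply rsum_ext; intros a Ha. apply rsum_ext; intros b Hb. rewrite Hd by auto.
      rewrite <- rsum_scal_l, <- rsum_scal_r. apply rsum_ext; intros; ring.
    - transitivity (rsum n (fun a => rsum n (fun k =>
                      rsum n (fun b => v a * U a k * lam k * U b k * v b)))).
      { apply rsum_ext; intros a _. apply rsum_swap. }
      rewrite rsum_swap. apply rsum_ext; intros k _. unfold c.
      rewrite <- rsum_scal_r, <- rsum_scal_l. apply rsum_ext; intros a _.
      rewrite <- !rsum_scal_l. apply rsum_ext; intros; ring. }
  rewrite Eq. split.
  - apply Rle_trans with (rsum n (fun k => lo * (c k * c k))).
    + rewrite rsum_scal_l, Ec. lra.
    + apply rsum_le; intros k Hk. specialize (Hl k Hk). pose proof (Rle_0_sqr (c k)).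
      unfold Rsqr in *. nra.
  - apply Rle_trans with (rsum n (fun k => hi * (c k * c k))).
    + apply rsum_le; intros k Hk. specialize (Hl k Hk). pose proof (Rle_0_sqr (c k)).
      unfold Rsqr in *. nra.
    + rewrite rsum_scal_l, Ec. lra.
Qed.

Definition abs_mass (n : nat) (X : mat) : R := rsum n (fun a => rsum n (fun b => Rabs (X a b))).

Lemma abs_mass_nonneg n X : 0 <= abs_mass n X.
Proof. apply rsum_nonneg; intros; apply rsum_nonneg; intros; apply Rabs_pos. Qed.

Lemma bilin_bound n X v w : (forall a, (a < n)%nat -> Rabs (v a) <= 1) ->
  (forall b, (b < n)%nat -> Rabs (w b) <= 1) ->
  Rabs (rsum n (fun a => rsum n (fun b => v a * X a b * w b))) <= abs_mass n X.
Proof.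
  intros Hv Hw. eapply Rle_trans; [apply rsum_abs|]. apply rsum_le; intros a Ha.
  eapply Rle_trans; [apply rsum_abs|]. apply rsum_le; intros b Hb.
  rewrite !Rabs_mult. specialize (Hv a Ha). specialize (Hw b Hb).
  pose proof (Rabs_pos (v a)). pose proof (Rabs_pos (w b)). pose proof (Rabs_pos (X a b)).
  apply Rle_trans with (1 * Rabs (X a b) * 1); [|lra].
  apply Rmult_le_compat; try nra.
Qed.

Lemma qform_bound n U X V k j : is_orth n U -> is_orth n V -> (k < n)%nat -> (j < n)%nat ->
  Rabs (qform n U X V k j) <= abs_mass n X.
Proof.
  intros HU HV Hk Hj. apply bilin_bound; intros; eapply orth_entry_bound; eauto.
Qed.

Definition qrow (n : nat) (U X : mat) (i b : nat) : R := rsum n (fun a => U a i * X a b).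

Lemma qform_qrow n U X V i j : qform n U X V i j = rsum n (fun b => qrow n U X i b * V b j).
Proof.
  unfold qform, qrow. rewrite rsum_swap. apply rsum_ext; intros b _.
  rewrite rsum_scal_r. auto.
Qed.

Lemma rsum_qrow_conj n U X V g i q :
  rsum n (fun b => qrow n U X i b * rsum n (fun j => V b j * g j * V q j))
  = rsum n (fun j => qform n U X V i j * g j * V q j).
Proof.
  transitivity (rsum n (fun b => rsum n (fun j => qrow n U X i b * V b j * (g j * V q j)))).
  - apply rsum_ext; intros b _. rewrite <- rsum_scal_l. apply rsum_ext; intros; ring.
  - rewrite rsum_swap. apply rsum_ext; intros j _.
    rewrite qform_qrow, <- rsum_scal_r, <- rsum_scal_r. apply rsum_ext; intros; ring.
Qed.

Lemma qrow_bound n U X i b : is_orth n U -> (i < n)%nat -> (b < n)%nat ->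
  Rabs (qrow n U X i b) <= abs_mass n X.
Proof.
  intros HU Hi Hb. unfold qrow, abs_mass. eapply Rle_trans; [apply rsum_abs|].
  apply rsum_le; intros a Ha. rewrite Rabs_mult.
  apply Rle_trans with (Rabs (X a b)).
  - pose proof (orth_entry_bound n U a i HU Ha Hi). pose proof (Rabs_pos (X a b)). nra.
  - apply (rsum_ge_term n (fun b => Rabs (X a b))); auto. intros; apply Rabs_pos.
Qed.

Lemma perturbed_eigval_range n A X U lam V mu lo hi h r :
  is_orth n U -> is_eigdec n A U lam -> (forall k, (k < n)%nat -> lo <= lam k <= hi) ->
  is_orth n V -> is_eigdec n (fun a b => A a b + h * X a b) V mu ->
  Rabs h * abs_mass n X <= r ->
  forall j, (j < n)%nat -> lo - r <= mu j <= hi + r.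
Proof.
  intros HU Hd Hl HV HdV Hr j Hj.
  rewrite (eigval_quad n _ V mu j HV HdV Hj).
  set (z := h * rsum n (fun a => rsum n (fun b => V a j * X a b * V b j))).
  replace (rsum n (fun a => rsum n (fun b => V a j * (A a b + h * X a b) * V b j)))
    with (rsum n (fun a => rsum n (fun b => V a j * A a b * V b j)) + z).
  2:{ unfold z. rewrite <- rsum_scal_l, <- rsum_plus. apply rsum_ext; intros a _.
      rewrite <- rsum_scal_l, <- rsum_plus. apply rsum_ext; intros; ring. }
  assert (Hunit : rsum n (fun a => V a j * V a j) = 1) by (rewrite (HV j j Hj Hj), Nat.eqb_refl; auto).
  pose proof (rayleigh_range n A U lam lo hi (fun a => V a j) HU Hd Hl Hunit).
  assert (Hz : Rabs z <= r).
  { unfold z. rewrite Rabs_mult. eapply Rle_trans; [|apply Hr].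
    apply Rmult_le_compat_l; [apply Rabs_pos|].
    apply bilin_bound; intros; eapply orth_entry_bound; eauto. }
  pose proof (Rle_abs z). pose proof (Rle_abs (- z)). rewrite Rabs_Ropp in *. lra.
Qed.

(* One of two regimes bounds [w D]: either [z] is below [d], or the product
   [w z <= e] forces [w] to be small. *)
Lemma small_weight_or_small_term w z D K e eta d :
  0 <= w <= 1 -> 0 <= D -> 0 < d -> w * z <= e ->
  (z < d -> D < eta) -> D <= K -> e * K <= eta * d -> w * D <= eta.
Proof.
  intros Hw HD Hd Hwz Hsmall HK Hed.
  destruct (Rlt_le_dec z d) as [Hz|Hz].
  - specialize (Hsmall Hz).
    assert (w * D <= 1 * D) by (apply Rmult_le_compat_r; lra). lra.
  - assert (Hwd : w * d <= e) by (eapply Rle_trans; [apply Rmult_le_compat_l|]; eauto; lra).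
    assert (Hwk : w * K * d <= eta * d).
    { replace (w * K * d) with ((w * d) * K) by ring.
      eapply Rle_trans; [apply Rmult_le_compat_r; [lra|apply Hwd]|auto]. }
    apply Rmult_le_reg_r in Hwk; [|auto].
    assert (w * D <= w * K) by (apply Rmult_le_compat_l; lra). lra.
Qed.

Lemma exists_small_factor K eps : 0 <= K -> 0 < eps -> exists eta, 0 < eta /\ K * eta < eps.
Proof.
  intros HK Heps. exists (eps / (K + 1)). split; [apply Rdiv_lt_0_compat; lra|].
  apply Rmult_lt_reg_r with (K + 1); [lra|].
  replace (K * (eps / (K + 1)) * (K + 1)) with (K * eps) by (field; lra). nra.
Qed.

Lemma step_size_bounds h lo C M eta d :
  0 < lo -> 0 <= C -> 0 <= M -> 0 < eta -> 0 < d ->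
  Rabs h < Rmin (lo / (2 * (C + 1))) (eta * d / (2 * M * C + 1)) ->
  Rabs h * C <= lo / 2 /\ Rabs h * C * (2 * M) <= eta * d.
Proof.
  intros Hlo HC HM Heta Hd Hh.
  pose proof (Rmin_l (lo / (2 * (C + 1))) (eta * d / (2 * M * C + 1))).
  pose proof (Rmin_r (lo / (2 * (C + 1))) (eta * d / (2 * M * C + 1))).
  pose proof (Rabs_pos h).
  assert (Hlo2 : Rabs h * (2 * (C + 1)) <= lo).
  { replace lo with (lo / (2 * (C + 1)) * (2 * (C + 1))) by (field; lra).
    apply Rmult_le_compat_r; lra. }
  assert (Heta2 : Rabs h * (2 * M * C + 1) <= eta * d).
  { replace (eta * d) with (eta * d / (2 * M * C + 1) * (2 * M * C + 1)) by (field; nra).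
    apply Rmult_le_compat_r; nra. }
  split; nra.
Qed.

Section DaleckiiKrein.

Variables (f f' : R -> R) (n : nat).

Definition dk_coef (U X : mat) (lam : nat -> R) : mat := fun i j =>
  qform n U X U i j * divdiff f f' (lam i) (lam j).

Definition dk_deriv (U X : mat) (lam : nat -> R) : mat := fun p q =>
  rsum n (fun i => rsum n (fun j => U p i * dk_coef U X lam i j * U q j)).

(* Since f(μ_j) - f(λ_i) = f^[1](λ_i, μ_j) (μ_j - λ_i), the perturbation identity
   for [gram] leaves only differences of divided differences in the remainder. *)
Lemma dk_remainder_eq U lam V mu X t p q :
  is_orth_rows n U -> is_orth_rows n V -> t <> 0 ->
  (forall k j, (k < n)%nat -> (j < n)%nat ->
     (mu j - lam k) * gram n U V k j = t * qform n U X V k j) ->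
  (p < n)%nat -> (q < n)%nat ->
  (rsum n (fun j => V p j * f (mu j) * V q j) - rsum n (fun i => U p i * f (lam i) * U q i)) / t
   - dk_deriv U X lam p q
  = rsum n (fun i => U p i * rsum n (fun b => qrow n U X i b *
      rsum n (fun k => rsum n (fun j => U b k * gram n U V k j *
          (divdiff f f' (lam i) (mu j) - divdiff f f' (lam i) (lam k)) * V q j)))).
Proof.
  intros HU HV Ht HW Hp Hq. unfold dk_deriv, dk_coef.
  rewrite <- (spectral_diff_gram n U V (fun j => f (mu j)) (fun i => f (lam i)) p q HU HV Hp Hq).
  transitivity
    (rsum n (fun i => rsum n (fun j =>
       U p i * qform n U X V i j * divdiff f f' (lam i) (mu j) * V q j))
     - rsum n (fun i => rsum n (fun j =>
       U p i * qform n U X U i j * divdiff f f' (lam i) (lam j) * U q j))).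
  - f_equal.
    + unfold Rdiv. rewrite <- rsum_scal_r. apply rsum_ext; intros i Hi.
      rewrite <- rsum_scal_r. apply rsum_ext; intros j Hj.
      assert (E : gram n U V i j * (f (mu j) - f (lam i))
                  = t * qform n U X V i j * divdiff f f' (lam i) (mu j)).
      { rewrite <- HW by auto.
        replace (f (mu j) - f (lam i)) with (- (f (lam i) - f (mu j))) by ring.
        rewrite <- (divdiff_mul f f' (lam i) (mu j)). ring. }
      transitivity (U p i * (gram n U V i j * (f (mu j) - f (lam i))) * V q j * / t); [ring|].
      rewrite E. field. auto.
    + apply rsum_ext; intros; apply rsum_ext; intros; ring.
  - rewrite <- rsum_minus. apply rsum_ext; intros i Hi.
    set (gV := fun b => rsum n (fun j => V b j * divdiff f f' (lam i) (mu j) * V q j)).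
    set (gU := fun b => rsum n (fun k => U b k * divdiff f f' (lam i) (lam k) * U q k)).
    transitivity (U p i * rsum n (fun b => qrow n U X i b * (gV b - gU b))).
    2:{ f_equal. apply rsum_ext; intros b Hb. f_equal. symmetry.
        apply spectral_diff_gram; auto. }
    rewrite (rsum_ext n (fun b => qrow n U X i b * (gV b - gU b))
                        (fun b => qrow n U X i b * gV b - qrow n U X i b * gU b))
      by (intros; ring).
    unfold gV, gU. rewrite rsum_minus, !rsum_qrow_conj, Rmult_minus_distr_l, <- !rsum_scal_l.
    f_equal; apply rsum_ext; intros; ring.
Qed.

Lemma dk_remainder_bound U X lam V mu p q eta :
  is_orth n U -> is_orth n V -> (p < n)%nat -> (q < n)%nat ->
  (forall i k j, (i < n)%nat -> (k < n)%nat -> (j < n)%nat ->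
     Rabs (gram n U V k j) *
     Rabs (divdiff f f' (lam i) (mu j) - divdiff f f' (lam i) (lam k)) <= eta) ->
  Rabs (rsum n (fun i => U p i * rsum n (fun b => qrow n U X i b *
      rsum n (fun k => rsum n (fun j => U b k * gram n U V k j *
          (divdiff f f' (lam i) (mu j) - divdiff f f' (lam i) (lam k)) * V q j)))))
  <= INR n * (INR n * (abs_mass n X * (INR n * (INR n * eta)))).
Proof.
  intros HU HV Hp Hq H. apply rsum_abs_bound; intros i Hi.
  rewrite Rabs_mult.
  apply Rle_trans with (1 * (INR n * (abs_mass n X * (INR n * (INR n * eta))))); [|lra].
  apply Rmult_le_compat; try apply Rabs_pos; [eapply orth_entry_bound; eauto|].
  apply rsum_abs_bound; intros b Hb. rewrite Rabs_mult.
  apply Rmult_le_compat; try apply Rabs_pos; [apply qrow_bound; auto|].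
  apply rsum_abs_bound; intros k Hk. apply rsum_abs_bound; intros j Hj.
  set (P := Rabs (gram n U V k j) *
            Rabs (divdiff f f' (lam i) (mu j) - divdiff f f' (lam i) (lam k))).
  assert (HP : 0 <= P) by (apply Rmult_le_pos; apply Rabs_pos).
  pose proof (orth_entry_bound n U b k HU Hb Hk).
  pose proof (orth_entry_bound n V q j HV Hq Hj).
  pose proof (Rabs_pos (U b k)). pose proof (Rabs_pos (V q j)).
  rewrite !Rabs_mult.
  replace (Rabs (U b k) * Rabs (gram n U V k j) *
           Rabs (divdiff f f' (lam i) (mu j) - divdiff f f' (lam i) (lam k)) * Rabs (V q j))
    with ((Rabs (U b k) * Rabs (V q j)) * P) by (unfold P; ring).
  specialize (H i k j Hi Hk Hj). fold P in H.
  apply Rle_trans with (1 * P); [apply Rmult_le_compat_r; nra|lra].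
Qed.

Hypothesis f_deriv : forall x, 0 < x -> derivable_pt_lim f x (f' x).
Hypothesis f'_bounded : forall a b, 0 < a -> exists M, forall x, a <= x <= b -> Rabs (f' x) <= M.

Lemma divdiff_uniform_delta (lam : nat -> R) eta :
  (forall k, (k < n)%nat -> 0 < lam k) -> 0 < eta ->
  exists d, 0 < d /\ forall i k y, (i < n)%nat -> (k < n)%nat -> 0 < y ->
    Rabs (y - lam k) < d ->
    Rabs (divdiff f f' (lam i) y - divdiff f f' (lam i) (lam k)) < eta.
Proof.
  intros Hl Heta.
  destruct (fin_common_delta n (fun i d => forall k y, (k < n)%nat -> 0 < y ->
      Rabs (y - lam k) < d -> Rabs (divdiff f f' (lam i) y - divdiff f f' (lam i) (lam k)) < eta))
    as [d [Hd Hall]].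
  - intros i d d' Hdd Hd' Hle k y Hk Hy Hyk. apply Hdd; auto. lra.
  - intros i Hi.
    destruct (fin_common_delta n (fun k d => forall y, 0 < y ->
      Rabs (y - lam k) < d -> Rabs (divdiff f f' (lam i) y - divdiff f f' (lam i) (lam k)) < eta))
      as [d [Hd Hall]].
    + intros k d d' Hdd Hd' Hle y Hy Hyk. apply Hdd; auto. lra.
    + intros k Hk. apply divdiff_continuous_r; auto.
    + exists d. split; auto.
  - exists d. split; auto.
Qed.

Lemma gram_divdiff_term_bound U V lam mu X h a b M eta d i k j :
  is_orth n U -> is_orth n V -> (k < n)%nat -> (j < n)%nat ->
  (mu j - lam k) * gram n U V k j = h * qform n U X V k j ->
  (forall x y, a <= x <= b -> a <= y <= b -> Rabs (divdiff f f' x y) <= M) ->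
  a <= lam i <= b -> a <= lam k <= b -> a <= mu j <= b -> 0 < d ->
  (Rabs (mu j - lam k) < d ->
     Rabs (divdiff f f' (lam i) (mu j) - divdiff f f' (lam i) (lam k)) < eta) ->
  Rabs h * abs_mass n X * (2 * M) <= eta * d ->
  Rabs (gram n U V k j) * Rabs (divdiff f f' (lam i) (mu j) - divdiff f f' (lam i) (lam k))
  <= eta.
Proof.
  intros HU HV Hk Hj HW HM Hi Hk' Hj' Hd Hsmall Hh.
  apply (small_weight_or_small_term _ (Rabs (mu j - lam k)) _ (2 * M) (Rabs h * abs_mass n X) _ d);
    auto; try apply Rabs_pos.
  - split; [apply Rabs_pos|apply gram_bound; auto].
  - rewrite <- Rabs_mult, Rmult_comm, HW, Rabs_mult.
    apply Rmult_le_compat_l; [apply Rabs_pos|apply qform_bound; auto].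
  - eapply Rle_trans; [apply Rabs_triang|]. rewrite Rabs_Ropp.
    pose proof (HM (lam i) (mu j) Hi Hj'). pose proof (HM (lam i) (lam k) Hi Hk'). lra.
Qed.

Theorem spectral_calculus_derivative (F : mat -> mat) A X U lam p q :
  (forall B V mu, is_sym n B -> is_orth n V -> is_eigdec n B V mu ->
     (forall k, (k < n)%nat -> 0 < mu k) ->
     forall p q, (p < n)%nat -> (q < n)%nat -> F B p q = rsum n (fun j => V p j * f (mu j) * V q j)) ->
  is_sym n A -> is_sym n X -> is_orth n U -> is_eigdec n A U lam ->
  (forall k, (k < n)%nat -> 0 < lam k) -> (p < n)%nat -> (q < n)%nat ->
  derivable_pt_lim (fun t => F (fun a b => A a b + t * X a b) p q) 0 (dk_deriv U X lam p q).
Proof.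
  intros HF HA HX HU Hd Hl Hp Hq eps Heps.
  destruct (fin_pos_lower_bound n lam Hl) as [lo [Hlo Hlo']].
  destruct (fin_upper_bound n lam) as [hi Hhi].
  set (C := abs_mass n X). assert (HC : 0 <= C) by apply abs_mass_nonneg.
  destruct (divdiff_bound f f' f_deriv (lo / 2) (hi + lo / 2)) as [M [HM0 HM]];
    [lra|apply f'_bounded; lra|].
  set (N := INR n). assert (HN : 0 <= N) by apply pos_INR.
  set (K := N * (N * (C * (N * N)))).
  assert (HK : 0 <= K) by (unfold K; repeat apply Rmult_le_pos; auto).
  destruct (exists_small_factor K eps HK Heps) as [eta [Heta HKeta]].
  destruct (divdiff_uniform_delta lam eta Hl Heta) as [d [Hd0 Hdd]].
  set (del := Rmin (lo / (2 * (C + 1))) (eta * d / (2 * M * C + 1))).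
  assert (Hdel : 0 < del) by (apply Rmin_pos; apply Rdiv_lt_0_compat; nra).
  exists (mkposreal del Hdel). intros h Hh0 Hhd. simpl in Hhd. unfold del in Hhd.
  rewrite Rplus_0_l.
  destruct (step_size_bounds h lo C M eta d) as [HhC HhM]; auto; try lra.
  set (Ah := fun a b => A a b + h * X a b).
  assert (HAh : is_sym n Ah) by (intros a b Ha Hb; unfold Ah; rewrite HA, HX; auto).
  destruct (spectral_decomposition n Ah HAh) as [V [mu [HV HdV]]].
  assert (Hmu : forall j, (j < n)%nat -> lo / 2 <= mu j <= hi + lo / 2).
  { intros j Hj.
    pose proof (perturbed_eigval_range n A X U lam V mu lo hi h (lo / 2) HU Hd
                  (fun k Hk => conj (Hlo' k Hk) (Hhi k Hk)) HV HdV HhC j Hj). lra. }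
  assert (HA0s : is_sym n (fun a b => A a b + 0 * X a b)).
  { intros a b Ha Hb. rewrite HA, HX by auto. auto. }
  assert (HA0 : is_eigdec n (fun a b => A a b + 0 * X a b) U lam).
  { intros a b Ha Hb. rewrite <- Hd by auto. ring. }
  assert (Hmu0 : forall j, (j < n)%nat -> 0 < mu j) by (intros j Hj; specialize (Hmu j Hj); lra).
  rewrite (HF Ah V mu HAh HV HdV Hmu0), (HF _ U lam HA0s HU HA0 Hl) by auto.
  rewrite (dk_remainder_eq U lam V mu X h p q (orth_rows n U HU) (orth_rows n V HV) Hh0)
    by (auto; intros; apply (gram_perturb n A X U lam V mu h); auto).
  eapply Rle_lt_trans; [|apply HKeta].
  unfold K, N, C. rewrite !Rmult_assoc.
  apply dk_remainder_bound; auto. intros i k j Hi Hk Hj.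
  specialize (Hmu j Hj). pose proof (Hlo' i Hi). pose proof (Hhi i Hi).
  pose proof (Hlo' k Hk). pose proof (Hhi k Hk).
  apply (gram_divdiff_term_bound U V lam mu X h (lo / 2) (hi + lo / 2) M eta d);
    auto; try lra.
  apply (gram_perturb n A X U lam V mu h); auto.
Qed.

End DaleckiiKrein.

Definition phi_scalar (th l : R) : R :=
  if Req_dec_T th 0 then ln l else / th * Rpower l th.
Definition phi_scalar' (th l : R) : R := Rpower l (th - 1).

Lemma phi_scalar_deriv th x : 0 < x -> derivable_pt_lim (phi_scalar th) x (phi_scalar' th x).
Proof.
  intros Hx. unfold phi_scalar, phi_scalar'. destruct Req_dec_T as [->|E].
  - replace (0 - 1) with (- (1)) by ring. rewrite Rpower_Ropp, Rpower_1 by auto.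
    apply derivable_pt_lim_ln; auto.
  - replace (Rpower x (th - 1)) with (/ th * (th * Rpower x (th - 1))) by (field; auto).
    apply (derivable_pt_lim_scal (fun l => Rpower l th)), derivable_pt_lim_power; auto.
Qed.

Lemma Rpower_le_on_interval a b x c : 0 < a -> a <= x <= b ->
  Rpower x c <= Rpower a c + Rpower b c.
Proof.
  intros Ha Hx. pose proof (exp_pos (c * ln a)). pose proof (exp_pos (c * ln b)).
  unfold Rpower in *.
  destruct (Rle_lt_dec 0 c) as [Hc|Hc].
  - pose proof (Rle_Rpower_l x b c Hc ltac:(lra)). unfold Rpower in *. lra.
  - pose proof (Rle_Rpower_l a x (- c) ltac:(lra) ltac:(lra)) as Hp.
    pose proof (Rpower_Ropp x (- c)) as Ex. pose proof (Rpower_Ropp a (- c)) as Ea.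
    rewrite Ropp_involutive in Ex, Ea. unfold Rpower in *. rewrite Ex, Ea.
    assert (/ exp (- c * ln x) <= / exp (- c * ln a)).
    { apply Rinv_le_contravar; [apply exp_pos|auto]. }
    lra.
Qed.

Lemma phi_scalar'_bounded th a b : 0 < a ->
  exists M, forall x, a <= x <= b -> Rabs (phi_scalar' th x) <= M.
Proof.
  intros Ha. exists (Rpower a (th - 1) + Rpower b (th - 1)). intros x Hx.
  unfold phi_scalar'. rewrite Rabs_pos_eq by (left; apply exp_pos).
  apply Rpower_le_on_interval; auto.
Qed.

Lemma divdiff_phi_scalar_pos th x y : 0 < x -> 0 < y ->
  0 < divdiff (phi_scalar th) (phi_scalar' th) x y.
Proof.
  intros Hx Hy.
  destruct (divdiff_mvt _ _ (phi_scalar_deriv th) x y Hx Hy) as [c [Hc ->]].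
  apply exp_pos.
Qed.

Lemma phi_eigdec n th B V mu : is_sym n B -> is_orth n V -> is_eigdec n B V mu ->
  (forall k, (k < n)%nat -> 0 < mu k) ->
  forall p q, (p < n)%nat -> (q < n)%nat ->
  phi n th B p q = rsum n (fun j => V p j * phi_scalar th (mu j) * V q j).
Proof.
  intros HS HV Hd Hmu p q Hp Hq. unfold phi, phi_scalar. destruct Req_dec_T as [E|E].
  - apply mfun_eigdec; auto.
  - unfold powm. rewrite (mfun_eigdec n _ B V mu HS HV Hd Hmu p q Hp Hq).
    rewrite <- rsum_scal_l. apply rsum_ext; intros; unfold Rpower; ring.
Qed.

Lemma dphi_eigdec n th S X U lam : is_sym n S -> is_sym n X -> is_orth n U ->
  is_eigdec n S U lam -> (forall k, (k < n)%nat -> 0 < lam k) ->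
  meq n (dphi n th S X) (dk_deriv (phi_scalar th) (phi_scalar' th) n U X lam).
Proof.
  intros HS HX HU Hd Hl.
  assert (HD : forall i j, (i < n)%nat -> (j < n)%nat ->
    derivable_pt_lim (fun t => phi n th (fun a b => S a b + t * X a b) i j) 0
      (dk_deriv (phi_scalar th) (phi_scalar' th) n U X lam i j)).
  { intros i j Hi Hj. apply spectral_calculus_derivative; auto.
    - apply phi_scalar_deriv.
    - apply phi_scalar'_bounded.
    - intros. apply phi_eigdec; auto. }
  unfold dphi.
  match goal with |- meq n (epsilon ?inh ?P) _ =>
    pose proof (epsilon_spec inh P (ex_intro _ _ HD)) as Heps end.
  intros i j Hi Hj.
  exact (uniqueness_limite _ 0 _ _ (Heps i j Hi Hj) (HD i j Hi Hj)).
Qed.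

Lemma dk_deriv_conj f f' n U X lam :
  meq n (dk_deriv f f' n U X lam) (mmul n (mmul n U (dk_coef f f' n U X lam)) (trm U)).
Proof. intros p q _ _. rewrite conj_entry. reflexivity. Qed.

Lemma gMPA_eigen n th1 th2 S X Y U lam : is_sym n S -> is_sym n X -> is_sym n Y ->
  is_orth n U -> is_eigdec n S U lam -> (forall k, (k < n)%nat -> 0 < lam k) ->
  gMPA n th1 th2 S X Y =
  rsum n (fun a => rsum n (fun b =>
    Rpower (lam a) (- ((th1 + th2) / 2)) *
    dk_coef (phi_scalar th1) (phi_scalar' th1) n U X lam a b *
    Rpower (lam b) (- ((th1 + th2) / 2)) *
    dk_coef (phi_scalar th2) (phi_scalar' th2) n U Y lam b a)).
Proof.
  intros HS HX HY HU Hd Hl. unfold gMPA. cbv zeta. set (th := - ((th1 + th2) / 2)).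
  set (D := diag (fun k => Rpower (lam k) th)).
  set (H1 := dk_coef (phi_scalar th1) (phi_scalar' th1) n U X lam).
  set (H2 := dk_coef (phi_scalar th2) (phi_scalar' th2) n U Y lam).
  assert (HP : meq n (powm n th S) (mmul n (mmul n U D) (trm U))).
  { apply is_eigdecE. intros p q Hp Hq. apply (mfun_eigdec n (fun l => Rpower l th)); auto. }
  assert (HD1 := meq_trans _ _ _ _ (dphi_eigdec n th1 S X U lam HS HX HU Hd Hl)
                   (dk_deriv_conj _ _ n U X lam)).
  assert (HD2 := meq_trans _ _ _ _ (dphi_eigdec n th2 S Y U lam HS HY HU Hd Hl)
                   (dk_deriv_conj _ _ n U Y lam)).
  fold H1 in HD1. fold H2 in HD2.
  rewrite (mtr_meq n _ (mmul n (mmul n U (mmul n (mmul n (mmul n D H1) D) H2)) (trm U))).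
  - rewrite mtr_conj by auto. unfold mtr. apply rsum_ext; intros a Ha. unfold mmul at 1.
    apply rsum_ext; intros b Hb. unfold D.
    rewrite mmul_diag_r, mmul_diag_l by auto. ring.
  - eapply meq_trans; [apply mmul_meq; [apply mmul_meq; [apply mmul_meq|]|]; eauto|].
    eapply meq_trans; [apply mmul_meq_l, mmul_meq_l, conj_mmul; auto|].
    eapply meq_trans; [apply mmul_meq_l, conj_mmul; auto|].
    apply conj_mmul; auto.
Qed.

Lemma dk_coef_sym f f' n U X lam i j : is_sym n X ->
  dk_coef f f' n U X lam i j = dk_coef f f' n U X lam j i.
Proof. intros HX. unfold dk_coef. rewrite qform_sym, divdiff_sym by auto. auto. Qed.

Lemma qform_conj_recover n U X : is_orth n U ->
  meq n X (mmul n (mmul n U (qform n U X U)) (trm U)).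
Proof.
  intros HU.
  assert (E : qform n U X U = mmul n (mmul n (trm U) X) U).
  { extensionality i; extensionality j. unfold qform, mmul, trm. rewrite rsum_swap.
    apply rsum_ext; intros b _. rewrite rsum_scal_r. auto. }
  rewrite E.
  replace (mmul n (mmul n U (mmul n (mmul n (trm U) X) U)) (trm U))
    with (mmul n (mmul n (mmul n U (trm U)) X) (mmul n U (trm U)))
    by (rewrite !mmul_assoc; auto).
  pose proof (proj1 (is_orth_rowsE n U) (orth_rows n U HU)) as HUU.
  apply meq_sym. eapply meq_trans; [apply mmul_meq; [apply mmul_meq_l|]; apply HUU|].
  eapply meq_trans; [apply mmul_idr|apply mmul_idl].
Qed.

Lemma qform_nonzero n U X : is_orth n U ->
  (exists i j, (i < n)%nat /\ (j < n)%nat /\ X i j <> 0) ->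
  exists a b, (a < n)%nat /\ (b < n)%nat /\ qform n U X U a b <> 0.
Proof.
  intros HU [i [j [Hi [Hj Hx]]]]. apply NNPP. intros Hn. apply Hx.
  rewrite (qform_conj_recover n U X HU i j Hi Hj), conj_entry.
  apply rsum_ext0; intros a Ha. apply rsum_ext0; intros b Hb.
  assert (qform n U X U a b = 0) as ->
    by (apply NNPP; intros C; apply Hn; exists a, b; auto).
  ring.
Qed.

Lemma spd_eigdec n S : is_spd n S ->
  exists U lam, is_orth n U /\ is_eigdec n S U lam /\ (forall k, (k < n)%nat -> 0 < lam k).
Proof.
  intros [HS Hpd]. destruct (spectral_decomposition n S HS) as [U [lam [HU Hd]]].
  exists U, lam. repeat split; auto. intros k Hk.
  rewrite (eigval_quad n S U lam k HU Hd Hk). apply Hpd.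
  apply NNPP. intros Hn. pose proof (HU k k Hk Hk) as E.
  rewrite Nat.eqb_refl, rsum_ext0 in E; [lra|].
  intros i Hi. assert (U i k = 0) as -> by (apply NNPP; intros C; apply Hn; exists i; auto).
  ring.
Qed.

Lemma gMPA_sym n th1 th2 S X Y : is_spd n S -> is_sym n X -> is_sym n Y ->
  gMPA n th1 th2 S X Y = gMPA n th1 th2 S Y X.
Proof.
  intros HS HX HY. destruct (spd_eigdec n S HS) as [U [lam [HU [Hd Hl]]]].
  rewrite !(gMPA_eigen n th1 th2 S _ _ U lam) by (auto; apply HS).
  apply rsum_ext; intros a Ha. apply rsum_ext; intros b Hb.
  unfold dk_coef. rewrite (qform_sym n U X b a), (qform_sym n U Y b a) by auto. ring.
Qed.

Lemma gMPA_swap_exponents n th1 th2 S X Y : is_spd n S -> is_sym n X -> is_sym n Y ->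
  gMPA n th1 th2 S X Y = gMPA n th2 th1 S X Y.
Proof.
  intros HS HX HY. destruct (spd_eigdec n S HS) as [U [lam [HU [Hd Hl]]]].
  rewrite !(gMPA_eigen _ _ _ S X Y U lam) by (auto; apply HS).
  rewrite (Rplus_comm th2 th1).
  apply rsum_ext; intros a Ha. apply rsum_ext; intros b Hb.
  unfold dk_coef. rewrite (divdiff_sym (phi_scalar th1) _ (lam b) (lam a)),
    (divdiff_sym (phi_scalar th2) _ (lam b) (lam a)). ring.
Qed.

(* The summand at (a, b) is a positive weight times (Uᵀ X U)_ab². *)
Lemma gMPA_pos n th1 th2 S X : is_spd n S -> is_sym n X ->
  (exists i j, (i < n)%nat /\ (j < n)%nat /\ X i j <> 0) ->
  0 < gMPA n th1 th2 S X X.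
Proof.
  intros HS HX Hnz. destruct (spd_eigdec n S HS) as [U [lam [HU [Hd Hl]]]].
  rewrite (gMPA_eigen n th1 th2 S X X U lam) by (auto; apply HS).
  set (th := - ((th1 + th2) / 2)).
  destruct (qform_nonzero n U X HU Hnz) as [a0 [b0 [Ha0 [Hb0 Hq]]]].
  set (w := fun a b => Rpower (lam a) th * Rpower (lam b) th *
    divdiff (phi_scalar th1) (phi_scalar' th1) (lam a) (lam b) *
    divdiff (phi_scalar th2) (phi_scalar' th2) (lam a) (lam b)).
  assert (Hw : forall a b, (a < n)%nat -> (b < n)%nat -> 0 < w a b).
  { intros a b Ha Hb. unfold w, Rpower.
    repeat apply Rmult_lt_0_compat; try apply exp_pos; apply divdiff_phi_scalar_pos; auto. }
  assert (Hterm : forall a b, (a < n)%nat -> (b < n)%nat ->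
    Rpower (lam a) th * dk_coef (phi_scalar th1) (phi_scalar' th1) n U X lam a b *
    Rpower (lam b) th * dk_coef (phi_scalar th2) (phi_scalar' th2) n U X lam b a
    = w a b * (qform n U X U a b * qform n U X U a b)).
  { intros a b Ha Hb. rewrite (dk_coef_sym _ _ n U X lam b a) by auto.
    unfold dk_coef, w. ring. }
  assert (Hnn : forall a b, (a < n)%nat -> (b < n)%nat ->
    0 <= w a b * (qform n U X U a b * qform n U X U a b)).
  { intros a b Ha Hb. apply Rmult_le_pos; [left; auto|apply Rle_0_sqr]. }
  apply rsum_pos.
  - intros a Ha. apply rsum_nonneg; intros b Hb. rewrite Hterm; auto.
  - exists a0. split; auto. apply rsum_pos.
    + intros b Hb. rewrite Hterm; auto.
    + exists b0. split; auto. rewrite Hterm by auto.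
      apply Rmult_lt_0_compat; [auto|apply Rsqr_pos_lt; auto].
Qed.

Theorem theorem5 (n : nat) (theta1 theta2 : R) (S : mat) :
  is_spd n S ->
  (forall X Y : mat, is_sym n X -> is_sym n Y ->
     gMPA n theta1 theta2 S X Y = gMPA n theta1 theta2 S Y X) /\
  (forall X : mat, is_sym n X ->
     (exists i j, (i < n)%nat /\ (j < n)%nat /\ X i j <> 0) ->
     0 < gMPA n theta1 theta2 S X X) /\
  (forall X Y : mat, is_sym n X -> is_sym n Y ->
     gMPA n theta1 theta2 S X Y = gMPA n theta2 theta1 S X Y).
Proof.
  intros HS. split; [|split].
  - intros X Y HX HY. apply gMPA_sym; auto.
  - intros X HX Hnz. apply gMPA_pos; auto.
  - intros X Y HX HY. apply gMPA_swap_exponents; auto.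
Qed.
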